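(* Let $f<0$, $g<0$ and $\rho\in(0,\tfrac12)$. There is a unique $\omega_+>0$ such that $|\mu_-(i\omega)|>1$ for all $\omega\in(0,\omega_+)$ and $|\mu_-(i\omega)|<1$ for all $\omega>\omega_+$. Moreover $\omega_+$ is the unique positive solution of $|\mu_-(i\omega)|=1$, and $$\omega_+^2=(1-2\rho)|f|\left(\Bigl(1-\frac{|f|}{2g^2}\Bigr)(1-2\rho)+\sqrt{\Bigl(1-\frac{|f|}{2g^2}\Bigr)^2(1-2\rho)^2+\frac{2|f|}{g^2}}\right).$$
   Context: $\gamma(\nu)=\frac{f+g\nu-\nu^2}{f+g\nu}$; $\mu_\pm(\nu)=\frac{1}{2\rho}\left(\gamma(\nu)\pm\sqrt{\gamma(\nu)^2-4\rho(1-\rho)}\right)$, the two roots of $\rho\mu^2-\gamma\mu+(1-\rho)=0$. Branch convention: for $w\neq0$, $\sqrt w$ is the square root of $w$ whose argument lies in $[0,\pi)$ (branch cut along the positive real axis). In the final formula, the square root is the ordinary nonnegative square root of a positive real number. *)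

From Stdlib Require Import Reals Lra.
Open Scope R_scope.

Definition C : Type := (R * R)%type.
Definition Cre (z : C) : R := fst z.
Definition Cim (z : C) : R := snd z.
Definition RtoC (a : R) : C := (a, 0).
Definition Ci : C := (0, 1).
Definition Cadd (z w : C) : C := (Cre z + Cre w, Cim z + Cim w).
Definition Copp (z : C) : C := (- Cre z, - Cim z).
Definition Csub (z w : C) : C := Cadd z (Copp w).
Definition Cmul (z w : C) : C :=
  (Cre z * Cre w - Cim z * Cim w, Cre z * Cim w + Cim z * Cre w).
Definition Cinv (z : C) : C :=
  (Cre z / (Cre z ^ 2 + Cim z ^ 2), - Cim z / (Cre z ^ 2 + Cim z ^ 2)).
Definition Cdiv (z w : C) : C := Cmul z (Cinv w).
Definition Cmod (z : C) : R := sqrt (Cre z ^ 2 + Cim z ^ 2).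

(* Square root with branch cut along the positive real axis: for w <> 0,
   Csqrt w is the square root of w whose argument lies in [0, pi),
   i.e. Im >= 0, and Re > 0 when Im = 0.  Explicit formula:
   Re = sgn(Im w) * sqrt((|w| + Re w)/2)  (sgn taken as +1 when Im w >= 0),
   Im = sqrt((|w| - Re w)/2).  (Csqrt 0 = 0.) *)
Definition Csqrt (w : C) : C :=
  ((if Rle_dec 0 (Cim w) then 1 else -1) * sqrt ((Cmod w + Cre w) / 2),
   sqrt ((Cmod w - Cre w) / 2)).

Definition gamma (f g : R) (nu : C) : C :=
  Cdiv (Csub (Cadd (RtoC f) (Cmul (RtoC g) nu)) (Cmul nu nu))
       (Cadd (RtoC f) (Cmul (RtoC g) nu)).

Definition mu_minus (f g rho : R) (nu : C) : C :=
  let gm := gamma f g nu in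
  Cdiv (Csub gm (Csqrt (Csub (Cmul gm gm) (RtoC (4 * rho * (1 - rho))))))
       (RtoC (2 * rho)).

Definition iw (omega : R) : C := (0, omega).

From Pilot Require Import Defs.
From Stdlib Require Import Reals ROrderedType Lra Psatz.
Open Scope R_scope.

(* On the imaginary axis gamma(i w) = a + i b with b > 0.  The branch convention
   makes the square root s point along gamma (Re (gamma conj s) > 0), so mu_- is
   the root of rho mu^2 - gamma mu + (1 - rho) of smaller modulus, and
   |mu_-|^2 < (1 - rho) / rho.  For a root mu one has gamma = rho mu + (1 - rho) / mu,
   which turns |mu| = 1 into e a^2 + b^2 = e with e = (1 - 2 rho)^2, and
   e a^2 + b^2 > e into |mu| < 1.  Clearing denominators, e a^2 + b^2 - e is w^2
   times a quadratic in w^2 whose roots are omega_+^2 > 0 and a negative number,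
   so |mu_-(i w)| - 1 changes sign exactly once, at omega_+. *)

Lemma Rcompare_Eq (x y : R) : x = y -> Rcompare x y = Eq.
Proof. intro h; destruct (Rcompare_spec x y); try reflexivity; lra. Qed.

Lemma Rcompare_Lt (x y : R) : x < y -> Rcompare x y = Lt.
Proof. intro h; destruct (Rcompare_spec x y); try reflexivity; lra. Qed.

Lemma Rcompare_Gt (x y : R) : y < x -> Rcompare x y = Gt.
Proof. intro h; destruct (Rcompare_spec x y); try reflexivity; lra. Qed.

Lemma Rcompare_0_sub (x y : R) : Rcompare 0 (y - x) = Rcompare x y.
Proof.
  destruct (Rcompare_spec x y) as [h|h|h];
    [apply Rcompare_Eq | apply Rcompare_Lt | apply Rcompare_Gt]; lra.
Qed.

Lemma Rcompare_0_mul_pos (x k : R) : 0 < k -> Rcompare 0 (x * k) = Rcompare 0 x.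
Proof.
  intro hk; destruct (Rcompare_spec 0 x) as [h|h|h];
    [apply Rcompare_Eq | apply Rcompare_Lt | apply Rcompare_Gt]; subst; nra.
Qed.

Lemma Rcompare_sqrt_l (x y : R) : 0 <= x -> 0 <= y ->
  Rcompare (sqrt x) y = Rcompare x (y ^ 2).
Proof.
  intros hx hy; rewrite <- (sqrt_pow2 y hy) at 1.
  destruct (Rcompare_spec x (y ^ 2)) as [h|h|h].
  - subst; apply Rcompare_Eq; reflexivity.
  - apply Rcompare_Lt, sqrt_lt_1_alt; lra.
  - apply Rcompare_Gt, sqrt_lt_1_alt; split; [apply pow2_ge_0 | lra].
Qed.

Lemma Csqrt_spec (u v : R) :
  let p := Cre (Csqrt (u, v)) in let q := Cim (Csqrt (u, v)) in
  p ^ 2 - q ^ 2 = u /\ 2 * p * q = v /\ 0 <= q /\ 0 <= v * p.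
Proof.
  unfold Csqrt, Cmod, Cre, Cim; cbn [fst snd].
  set (m := sqrt (u ^ 2 + v ^ 2)).
  assert (hm : m * m = u ^ 2 + v ^ 2) by (apply sqrt_sqrt; nra).
  assert (hm0 : 0 <= m) by apply sqrt_pos.
  assert (hplus : 0 <= (m + u) / 2) by nra.
  assert (hminus : 0 <= (m - u) / 2) by nra.
  pose proof (sqrt_sqrt _ hplus) as eP; pose proof (sqrt_sqrt _ hminus) as eQ.
  pose proof (sqrt_pos ((m + u) / 2)); pose proof (sqrt_pos ((m - u) / 2)).
  set (P := sqrt ((m + u) / 2)) in *; set (Q := sqrt ((m - u) / 2)) in *.
  assert (hPQ : (2 * P * Q) ^ 2 = v ^ 2).
  { replace ((2 * P * Q) ^ 2) with (4 * (P * P) * (Q * Q)) by ring.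
    rewrite eP, eQ; nra. }
  assert (hPQv : 2 * P * Q = Rabs v).
  { apply Rsqr_inj; [nra | apply Rabs_pos |].
    unfold Rsqr; rewrite <- Rabs_mult, Rabs_pos_eq by nra; nra. }
  destruct (Rle_dec 0 v) as [hv|hv].
  - rewrite Rabs_pos_eq in hPQv by exact hv; repeat split; nra.
  - rewrite Rabs_left in hPQv by lra; repeat split; nra.
Qed.

Lemma Csqrt_aligned (a b c : R) : 0 < b -> 0 < c ->
  let s := Csqrt (a ^ 2 - b ^ 2 - c, 2 * a * b) in 0 < a * Cre s + b * Cim s.
Proof.
  intros hb hc s.
  destruct (Csqrt_spec (a ^ 2 - b ^ 2 - c) (2 * a * b)) as (hsq & hprod & hq & hp).
  fold s in hsq, hprod, hq, hp; set (p := Cre s) in *; set (q := Cim s) in *.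
  assert (hq0 : 0 < q).
  { destruct hq as [hq|hq]; [exact hq|].
    assert (ha : a = 0) by (rewrite <- hq in hprod; nra).
    rewrite <- hq, ha in hsq; nra. }
  assert (hap : 0 <= a * p) by nra.
  nra.
Qed.

Lemma gamma_iw (f g w : R) : f <> 0 ->
  gamma f g (iw w) =
    (1 + f * w ^ 2 / (f ^ 2 + g ^ 2 * w ^ 2), - g * w ^ 3 / (f ^ 2 + g ^ 2 * w ^ 2)).
Proof.
  intro hf; assert (hN : f ^ 2 + g ^ 2 * w ^ 2 <> 0) by (apply Rgt_not_eq; nra).
  unfold gamma, Cdiv, Csub, Cadd, Cmul, Copp, Cinv, RtoC, iw, Cre, Cim; cbn [fst snd].
  f_equal; field; nra.
Qed.

Lemma mu_minus_eq (f g rho a b : R) (nu : Defs.C) :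
  rho <> 0 -> gamma f g nu = (a, b) ->
  let s := Csqrt (a ^ 2 - b ^ 2 - 4 * rho * (1 - rho), 2 * a * b) in
  mu_minus f g rho nu = ((a - Cre s) / (2 * rho), (b - Cim s) / (2 * rho)).
Proof.
  intros hr hgm s; unfold mu_minus; rewrite hgm.
  replace (Csub (Cmul (a, b) (a, b)) (RtoC (4 * rho * (1 - rho))))
    with (a ^ 2 - b ^ 2 - 4 * rho * (1 - rho), 2 * a * b)
    by (unfold Csub, Cmul, Cadd, Copp, RtoC, Cre, Cim; cbn [fst snd]; f_equal; ring).
  fold s; unfold Cdiv, Csub, Cmul, Cadd, Copp, Cinv, RtoC, Cre, Cim; cbn [fst snd].
  f_equal; field; exact hr.
Qed.

Lemma minus_root_small (a b c p q : R) : 0 < c ->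
  p ^ 2 - q ^ 2 = a ^ 2 - b ^ 2 - c -> 2 * p * q = 2 * a * b -> 0 < a * p + b * q ->
  0 < (a - p) ^ 2 + (b - q) ^ 2 < c.
Proof.
  intros hc hsq hprod halign.
  (* |gm - s| |gm + s| = |gm^2 - s^2| = c, and alignment makes |gm - s| the smaller factor *)
  set (L := (a - p) ^ 2 + (b - q) ^ 2); set (M := (a + p) ^ 2 + (b + q) ^ 2).
  assert (hLM : L * M = c ^ 2).
  { replace (L * M)
      with ((a ^ 2 - b ^ 2 - (p ^ 2 - q ^ 2)) ^ 2 + (2 * a * b - 2 * p * q) ^ 2)
      by (unfold L, M; ring).
    rewrite hsq, hprod; ring. }
  assert (hLltM : L < M) by (unfold L, M; nra).
  assert (hL0 : 0 <= L) by (unfold L; nra).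
  assert (hL : 0 < L) by (destruct hL0 as [h|h]; [exact h | rewrite <- h in hLM; nra]).
  split; nra.
Qed.

Lemma minus_root_quadratic (a b rho p q : R) : 0 < rho ->
  p ^ 2 - q ^ 2 = a ^ 2 - b ^ 2 - 4 * rho * (1 - rho) -> 2 * p * q = 2 * a * b ->
  let x := (a - p) / (2 * rho) in let y := (b - q) / (2 * rho) in
  rho * (x ^ 2 - y ^ 2) - (a * x - b * y) + (1 - rho) = 0 /\
  2 * rho * x * y - (a * y + b * x) = 0.
Proof.
  intros hr hsq hprod x y; split.
  - replace (rho * (x ^ 2 - y ^ 2) - (a * x - b * y) + (1 - rho))
      with ((p ^ 2 - q ^ 2 - (a ^ 2 - b ^ 2 - 4 * rho * (1 - rho))) / (4 * rho))
      by (unfold x, y; field; lra).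
    rewrite hsq; field; lra.
  - replace (2 * rho * x * y - (a * y + b * x)) with ((2 * p * q - 2 * a * b) / (4 * rho))
      by (unfold x, y; field; lra).
    rewrite hprod; field; lra.
Qed.

Lemma root_modulus_identity (a b rho x y : R) :
  rho * (x ^ 2 - y ^ 2) - (a * x - b * y) + (1 - rho) = 0 ->
  2 * rho * x * y - (a * y + b * x) = 0 ->
  let t := x ^ 2 + y ^ 2 in let e := (1 - 2 * rho) ^ 2 in
  t ^ 2 * (e * a ^ 2 + b ^ 2 - e) =
    (1 - t) * (((1 - rho) ^ 2 - rho ^ 2 * t) * (e * x ^ 2 + y ^ 2)).
Proof.
  intros hre him t e.
  (* the root z = x + iy recovers the coefficient: a + ib = rho z + (1 - rho) / z *)
  assert (ha : a * t = x * (rho * t + (1 - rho))).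
  { apply Rminus_diag_uniq.
    replace (a * t - x * (rho * t + (1 - rho))) with
      (- x * (rho * (x ^ 2 - y ^ 2) - (a * x - b * y) + (1 - rho))
       - y * (2 * rho * x * y - (a * y + b * x))) by (unfold t; ring).
    rewrite hre, him; ring. }
  assert (hb : b * t = y * (rho * t - (1 - rho))).
  { apply Rminus_diag_uniq.
    replace (b * t - y * (rho * t - (1 - rho))) with
      (y * (rho * (x ^ 2 - y ^ 2) - (a * x - b * y) + (1 - rho))
       - x * (2 * rho * x * y - (a * y + b * x))) by (unfold t; ring).
    rewrite hre, him; ring. }
  replace (t ^ 2 * (e * a ^ 2 + b ^ 2 - e)) with (e * (a * t) ^ 2 + (b * t) ^ 2 - e * t ^ 2)
    by ring.
  rewrite ha, hb; unfold t, e; ring.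
Qed.

Lemma sign_transfer (t W K : R) : 0 < t -> 0 < K -> t ^ 2 * W = (1 - t) * K ->
  Rcompare t 1 = Rcompare 0 W.
Proof.
  intros ht hK hW.
  rewrite <- Rcompare_0_sub, <- (Rcompare_0_mul_pos (1 - t) K hK), <- hW,
    Rmult_comm; apply Rcompare_0_mul_pos; nra.
Qed.

Lemma minus_root_modulus_compare (a b rho : R) : 0 < b -> 0 < rho < 1 / 2 ->
  let s := Csqrt (a ^ 2 - b ^ 2 - 4 * rho * (1 - rho), 2 * a * b) in
  let x := (a - Cre s) / (2 * rho) in let y := (b - Cim s) / (2 * rho) in
  Rcompare (x ^ 2 + y ^ 2) 1 =
    Rcompare 0 ((1 - 2 * rho) ^ 2 * a ^ 2 + b ^ 2 - (1 - 2 * rho) ^ 2).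
Proof.
  intros hb hr s x y.
  assert (hc : 0 < 4 * rho * (1 - rho)) by nra.
  destruct (Csqrt_spec (a ^ 2 - b ^ 2 - 4 * rho * (1 - rho)) (2 * a * b))
    as (hsq & hprod & _ & _).
  fold s in hsq, hprod.
  destruct (minus_root_small a b _ (Cre s) (Cim s) hc hsq hprod (Csqrt_aligned a b _ hb hc))
    as [hL0 hLc].
  destruct (minus_root_quadratic a b rho (Cre s) (Cim s) (proj1 hr) hsq hprod) as [hre him].
  fold x y in hre, him.
  set (t := x ^ 2 + y ^ 2).
  assert (hL : (a - Cre s) ^ 2 + (b - Cim s) ^ 2 = 4 * rho ^ 2 * t)
    by (unfold t, x, y; field; lra).
  rewrite hL in hL0, hLc.
  apply (sign_transfer t _ (((1 - rho) ^ 2 - rho ^ 2 * t) * ((1 - 2 * rho) ^ 2 * x ^ 2 + y ^ 2))).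
  - nra.
  - apply Rmult_lt_0_compat; [nra|].
    assert (he : 0 < (1 - 2 * rho) ^ 2 <= 1) by (split; nra).
    assert (0 <= (1 - (1 - 2 * rho) ^ 2) * y ^ 2) by (apply Rmult_le_pos; nra).
    unfold t in hL0; nra.
  - exact (root_modulus_identity a b rho x y hre him).
Qed.

Definition crossing_poly (f g rho X : R) : R :=
  g ^ 2 * X ^ 2 + (1 - 2 * rho) ^ 2 * f * (2 * g ^ 2 + f) * X
  + 2 * f ^ 3 * (1 - 2 * rho) ^ 2.

Definition omega_plus_sq (f g rho : R) : R :=
  (1 - 2 * rho) * Rabs f *
  ((1 - Rabs f / (2 * g ^ 2)) * (1 - 2 * rho) +
   sqrt ((1 - Rabs f / (2 * g ^ 2)) ^ 2 * (1 - 2 * rho) ^ 2 + 2 * Rabs f / g ^ 2)).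

Definition omega_minus_sq (f g rho : R) : R :=
  (1 - 2 * rho) * Rabs f *
  ((1 - Rabs f / (2 * g ^ 2)) * (1 - 2 * rho) -
   sqrt ((1 - Rabs f / (2 * g ^ 2)) ^ 2 * (1 - 2 * rho) ^ 2 + 2 * Rabs f / g ^ 2)).

Lemma gamma_iw_criterion (f g rho w : R) : f <> 0 ->
  let N := f ^ 2 + g ^ 2 * w ^ 2 in
  let a := 1 + f * w ^ 2 / N in let b := - g * w ^ 3 / N in
  ((1 - 2 * rho) ^ 2 * a ^ 2 + b ^ 2 - (1 - 2 * rho) ^ 2) * N ^ 2 =
    w ^ 2 * crossing_poly f g rho (w ^ 2).
Proof.
  intros hf N a b; unfold a, b, crossing_poly.
  assert (hN : N <> 0) by (apply Rgt_not_eq; unfold N; nra).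
  unfold N in *; field; intro h; apply hN; rewrite <- h; ring.
Qed.

Lemma crossing_discriminant (f g rho : R) : f < 0 -> g <> 0 ->
  let z := (1 - Rabs f / (2 * g ^ 2)) * (1 - 2 * rho) in
  let r := sqrt ((1 - Rabs f / (2 * g ^ 2)) ^ 2 * (1 - 2 * rho) ^ 2 + 2 * Rabs f / g ^ 2) in
  r * r = z ^ 2 + 2 * Rabs f / g ^ 2 /\ z - r < 0 < z + r.
Proof.
  intros hf hg z r.
  assert (hFg : 0 < 2 * Rabs f / g ^ 2)
    by (apply Rdiv_lt_0_compat; [apply Rmult_lt_0_compat; [lra | apply Rabs_pos_lt; lra]
                                | rewrite <- Rsqr_pow2; apply Rlt_0_sqr, hg]).
  assert (hrr : r * r = z ^ 2 + 2 * Rabs f / g ^ 2).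
  { unfold r; rewrite sqrt_sqrt; unfold z; [ring |].
    pose proof (pow2_ge_0 ((1 - Rabs f / (2 * g ^ 2)) * (1 - 2 * rho))).
    rewrite Rpow_mult_distr in *; lra. }
  assert (hr : 0 <= r) by apply sqrt_pos.
  assert (hzr : Rabs z < r).
  { assert (Rabs z * Rabs z = z ^ 2) by (rewrite <- Rabs_mult, Rabs_pos_eq; nra).
    pose proof (Rabs_pos z); nra. }
  pose proof (Rle_abs z); pose proof (Rle_abs (- z)); rewrite Rabs_Ropp in *.
  split; [exact hrr | split; lra].
Qed.

Lemma crossing_poly_factor (f g rho X : R) : f < 0 -> g <> 0 ->
  crossing_poly f g rho X =
    g ^ 2 * (X - omega_plus_sq f g rho) * (X - omega_minus_sq f g rho).
Proof.
  intros hf hg.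
  destruct (crossing_discriminant f g rho hf hg) as [hrr _].
  unfold omega_plus_sq, omega_minus_sq.
  set (z := (1 - Rabs f / (2 * g ^ 2)) * (1 - 2 * rho)) in *.
  set (r := sqrt _) in *.
  set (k := (1 - 2 * rho) * Rabs f).
  transitivity (g ^ 2 * ((X - k * z) ^ 2 - k ^ 2 * (r * r))).
  - rewrite hrr; unfold crossing_poly, k, z; rewrite (Rabs_left f hf); field.
    exact hg.
  - ring.
Qed.

Lemma omega_sq_signs (f g rho : R) : f < 0 -> g <> 0 -> 0 < rho < 1 / 2 ->
  omega_minus_sq f g rho < 0 < omega_plus_sq f g rho.
Proof.
  intros hf hg hrho.
  destruct (crossing_discriminant f g rho hf hg) as [_ hzr].
  assert (hk : 0 < (1 - 2 * rho) * Rabs f)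
    by (apply Rmult_lt_0_compat; [lra | apply Rabs_pos_lt; lra]).
  unfold omega_plus_sq, omega_minus_sq; split; nra.
Qed.

Lemma crossing_poly_compare (f g rho X : R) : f < 0 -> g <> 0 -> 0 < rho < 1 / 2 ->
  0 < X -> Rcompare 0 (crossing_poly f g rho X) = Rcompare (omega_plus_sq f g rho) X.
Proof.
  intros hf hg hrho hX.
  destruct (omega_sq_signs f g rho hf hg hrho) as [hm _].
  rewrite crossing_poly_factor by assumption.
  replace (g ^ 2 * (X - omega_plus_sq f g rho) * (X - omega_minus_sq f g rho))
    with ((X - omega_plus_sq f g rho) * (g ^ 2 * (X - omega_minus_sq f g rho))) by ring.
  rewrite Rcompare_0_mul_pos
    by (apply Rmult_lt_0_compat; [rewrite <- Rsqr_pow2; apply Rlt_0_sqr, hg |]; lra).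
  apply Rcompare_0_sub.
Qed.

Lemma Cmod_mu_minus_iw_compare (f g rho w : R) : f < 0 -> g < 0 -> 0 < rho < 1 / 2 ->
  0 < w ->
  Rcompare (Cmod (mu_minus f g rho (iw w))) 1 = Rcompare (sqrt (omega_plus_sq f g rho)) w.
Proof.
  intros hf hg hrho hw.
  assert (hf0 : f <> 0) by lra.
  assert (hN : 0 < f ^ 2 + g ^ 2 * w ^ 2) by nra.
  set (N := f ^ 2 + g ^ 2 * w ^ 2) in *.
  set (a := 1 + f * w ^ 2 / N); set (b := - g * w ^ 3 / N).
  assert (hb : 0 < b).
  { apply Rdiv_lt_0_compat; [|exact hN]. pose proof (pow_lt w 3 hw); nra. }
  rewrite (mu_minus_eq f g rho a b (iw w)) by (lra || apply gamma_iw, hf0).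
  unfold Cmod, Cre, Cim; cbn [fst snd].
  rewrite Rcompare_sqrt_l, pow1, minus_root_modulus_compare
    by first [exact hb | exact hrho | lra | apply Rplus_le_le_0_compat; apply pow2_ge_0].
  rewrite <- (Rcompare_0_mul_pos _ (N ^ 2)) by nra.
  pose proof (gamma_iw_criterion f g rho w hf0) as hcrit; cbv zeta in hcrit.
  fold N in hcrit; fold a b in hcrit.
  rewrite hcrit, Rmult_comm, Rcompare_0_mul_pos by nra.
  rewrite crossing_poly_compare by (nra || lra).
  destruct (omega_sq_signs f g rho hf ltac:(lra) hrho).
  symmetry; apply Rcompare_sqrt_l; lra.
Qed.

Section Threshold.

Variables (h : R -> R) (T : R).
Hypotheses (hT : 0 < T) (h_compare : forall w, 0 < w -> Rcompare (h w) 1 = Rcompare T w).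

Lemma threshold_below (w : R) : 0 < w < T -> h w > 1.
Proof.
  intro hw; pose proof (h_compare w (proj1 hw)) as e.
  rewrite (Rcompare_Gt T w) in e by lra.
  destruct (Rcompare_spec (h w) 1); [discriminate | discriminate | lra].
Qed.

Lemma threshold_above (w : R) : w > T -> h w < 1.
Proof.
  intro hw; pose proof (h_compare w ltac:(lra)) as e.
  rewrite (Rcompare_Lt T w) in e by lra.
  destruct (Rcompare_spec (h w) 1); [discriminate | lra | discriminate].
Qed.

Lemma threshold_level (w : R) : 0 < w -> (h w = 1 <-> w = T).
Proof.
  intro hw; split.
  - intro e; destruct (Rtotal_order w T) as [hl|[he|hg]]; [| exact he |].
    + pose proof (threshold_below w (conj hw hl)); lra.
    + pose proof (threshold_above w hg); lra.
  - intros ->; pose proof (h_compare T hT) as e.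
    rewrite (Rcompare_Eq T T) in e by reflexivity.
    destruct (Rcompare_spec (h T) 1); [assumption | discriminate | discriminate].
Qed.

Lemma threshold_unique (T' : R) : 0 < T' ->
  (forall w, 0 < w < T' -> h w > 1) -> (forall w, w > T' -> h w < 1) -> T' = T.
Proof.
  intros hT' below above.
  destruct (Rtotal_order T' T) as [hl|[he|hg]]; [| exact he |].
  - pose proof (above ((T' + T) / 2) ltac:(lra));
      pose proof (threshold_below ((T' + T) / 2) ltac:(lra)); lra.
  - pose proof (below ((T' + T) / 2) ltac:(lra));
      pose proof (threshold_above ((T' + T) / 2) ltac:(lra)); lra.
Qed.

End Threshold.

Theorem mainTheorem11 (f g rho : R) (hf : f < 0) (hg : g < 0)
  (hrho : 0 < rho < 1 / 2) :
  exists omp : R,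
    (0 < omp /\
     (forall w, 0 < w < omp -> Cmod (mu_minus f g rho (iw w)) > 1) /\
     (forall w, w > omp -> Cmod (mu_minus f g rho (iw w)) < 1)) /\
    (forall omp' : R,
       0 < omp' ->
       (forall w, 0 < w < omp' -> Cmod (mu_minus f g rho (iw w)) > 1) ->
       (forall w, w > omp' -> Cmod (mu_minus f g rho (iw w)) < 1) ->
       omp' = omp) /\
    (forall w, 0 < w -> (Cmod (mu_minus f g rho (iw w)) = 1 <-> w = omp)) /\
    omp ^ 2 =
      (1 - 2 * rho) * Rabs f *
      ((1 - Rabs f / (2 * g ^ 2)) * (1 - 2 * rho) +
       sqrt ((1 - Rabs f / (2 * g ^ 2)) ^ 2 * (1 - 2 * rho) ^ 2
             + 2 * Rabs f / g ^ 2)).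
Proof.
  destruct (omega_sq_signs f g rho hf ltac:(lra) hrho) as [_ hpos].
  set (h := fun w => Cmod (mu_minus f g rho (iw w))).
  set (T := sqrt (omega_plus_sq f g rho)).
  assert (hT : 0 < T) by (apply sqrt_lt_R0, hpos).
  assert (hcmp : forall w, 0 < w -> Rcompare (h w) 1 = Rcompare T w)
    by (intros w hw; apply Cmod_mu_minus_iw_compare; assumption).
  exists T; split; [split; [exact hT | split] | split; [| split]].
  - exact (threshold_below h T hcmp).
  - exact (threshold_above h T hT hcmp).
  - exact (threshold_unique h T hT hcmp).
  - exact (threshold_level h T hT hcmp).
  - exact (pow2_sqrt _ (Rlt_le _ _ hpos)).
Qed.
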